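(* Let $f$ be a tournament solution that is TS-Condorcet consistent. Then $f$-Approval is monotonic if and only if $f$ satisfies both the TS-exclusive monotonicity criterion and the TS-exclusive negative monotonicity (ENM) criterion.
   Context: A tournament $T=(V(T),\succ)$ is a finite set of candidates with an asymmetric and complete binary relation $\succ$. $N^+_T(c)=\{b: c\succ b\}$ is the set of outneighbors of $c$; $T[B]$ is the subtournament induced by $B\subseteq V(T)$. The source (Condorcet winner) of $T$ is a candidate $a$ with $a\succ b$ for all $b\neq a$. A tournament solution $f$ maps every tournament $T$ to a nonempty subset $f(T)\subseteq V(T)$. An election $\mathcal{E}=(\mathcal{C},\mathcal{T})$ consists of a finite candidate set $\mathcal{C}$ and a finite list $\mathcal{T}$ of votes, each a tournament on $\mathcal{C}$. $f$-Approval gives each candidate $c$ the score $|\{T\in\mathcal{T}: c\in f(T)\}|$ (with multiplicity) and its winners are the candidates of highest score. Say a pair of tournaments $T=(\mathcal{C},\succ)$, $T'=(\mathcal{C},\succ')$ is a $c$-improvement (for $c\in\mathcal{C}$) if $T[\mathcal{C}\setminus\{c\}]=T'[\mathcal{C}\setminus\{c\}]$ and $N^+_T(c)\subseteq N^+_{T'}(c)$. - $f$ is TS-Condorcet consistent if $f(T)=\{w\}$ whenever $T$ has a source $w$. - $f$ is TS-exclusive monotonic if for every $c$-improvement $(T,T')$ with $c\in f(T)$, we have $c\in f(T')$ and $f(T')\subseteq f(T)$. - $f$ satisfies TS-ENM if for every $c$-improvement $(T,T')$ with $c\notin f(T)$, $f(T')\not\subseteq f(T)$ implies $c\in f(T')$.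 - A voting correspondence $\varphi$ is monotonic if for every two elections $\mathcal{E}=(\mathcal{C},(T_1,\dots,T_n))$, $\mathcal{E}'=(\mathcal{C},(T_1',\dots,T_n'))$ and every $c\in\varphi(\mathcal{E})$ such that $(T_i,T_i')$ is a $c$-improvement for every $i$, it holds that $c\in\varphi(\mathcal{E}')$. *)

From mathcomp Require Import all_boot.
Set Implicit Arguments. Unset Strict Implicit. Unset Printing Implicit Defensive.

Definition is_tournament (C : finType) (T : rel C) : Prop :=
  (forall a b : C, T a b -> ~~ T b a) /\
  (forall a b : C, a != b -> T a b || T b a).

Definition outn (C : finType) (T : rel C) (c : C) : {set C} := [set b | T c b].

Definition is_source (C : finType) (T : rel C) (w : C) : Prop :=
  forall b : C, b != w -> T w b.

(* A (candidate) tournament solution: a function on relations over every finite type;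
   only its values on tournaments matter. *)
Definition tsolution := forall C : finType, rel C -> {set C}.

Definition is_tournament_solution (f : tsolution) : Prop :=
  forall (C : finType) (T : rel C), 0 < #|C| -> is_tournament T -> f C T != set0.

Definition c_improvement (C : finType) (c : C) (T T' : rel C) : Prop :=
  [/\ is_tournament T, is_tournament T',
      (forall a b : C, a != c -> b != c -> T a b = T' a b)
    & outn T c \subset outn T' c].

Definition TS_Condorcet_consistent (f : tsolution) : Prop :=
  forall (C : finType) (T : rel C) (w : C),
    is_tournament T -> is_source T w -> f C T = [set w].

Definition TS_exclusive_monotonic (f : tsolution) : Prop :=
  forall (C : finType) (c : C) (T T' : rel C),
    c_improvement c T T' -> c \in f C T ->
    c \in f C T' /\ f C T' \subset f C T.

Definition TS_ENM (f : tsolution) : Prop :=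
  forall (C : finType) (c : C) (T T' : rel C),
    c_improvement c T T' -> c \notin f C T ->
    ~~ (f C T' \subset f C T) -> c \in f C T'.

(* Elections: candidate set C and a list of n votes (tournaments), indexed by 'I_n
   (multiplicity is respected). *)
Definition election_ok (C : finType) (n : nat) (E : 'I_n -> rel C) : Prop :=
  forall i, is_tournament (E i).

Definition approval_score (f : tsolution) (C : finType) (n : nat)
  (E : 'I_n -> rel C) (c : C) : nat := #|[set i : 'I_n | c \in f C (E i)]|.

Definition approval_winners (f : tsolution) (C : finType) (n : nat)
  (E : 'I_n -> rel C) : {set C} :=
  [set c | [forall d, approval_score f E d <= approval_score f E c]].

Definition approval_monotonic (f : tsolution) : Prop :=
  forall (C : finType) (n : nat) (E E' : 'I_n -> rel C) (c : C),
    election_ok E -> election_ok E' ->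
    c \in approval_winners f E ->
    (forall i, c_improvement c (E i) (E' i)) ->
    c \in approval_winners f E'.

From mathcomp Require Import all_boot zify.

(* Sufficiency: for a c-improvement of one vote, exclusive monotonicity and ENM
   ensure that whenever some d gains approval, so does c, and whenever c loses
   approval, so does d; summing over the votes, c keeps its lead.
   Necessity: a failure of either criterion on a pair (T, T') is padded with
   votes having a prescribed source, which by Condorcet consistency approve
   exactly that source; choosing the sources so that c is a co-winner before
   the improvement and is overtaken afterwards contradicts monotonicity. *)

Definition source_rel {C : finType} (w : C) : rel C :=
  fun a b => (a != b) && ((a == w) || (b != w) && (enum_rank a < enum_rank b)).

Lemma source_rel_tournament (C : finType) (w : C) : is_tournament (source_rel w).
Proof.
split=> a b; rewrite /source_rel eq_sym; last first.
  move=> ab; rewrite ab /=.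
  case: eqVneq => //= aw; case: eqVneq => //= bw.
  by case: ltngtP => // /val_inj/enum_rank_inj eq_ab; rewrite eq_ab eqxx in ab.
case/andP=> ab; rewrite ab /=.
case: (eqVneq a w) => [<- _ | aw /= /andP[bw lt_ab]]; first by rewrite (negbTE ab).
by rewrite (negbTE bw) /= -leqNgt ltnW.
Qed.

Lemma source_rel_source (C : finType) (w : C) : is_source (source_rel w) w.
Proof. by move=> b bw; rewrite /source_rel eq_sym bw eqxx. Qed.

Lemma c_improvement_refl (C : finType) (c : C) (T : rel C) :
  is_tournament T -> c_improvement c T T.
Proof. by split. Qed.

Section Approval.

Variable f : tsolution.

Lemma approval_scoreE (C : finType) (n : nat) (E : 'I_n -> rel C) (x : C) :
  approval_score f E x = \sum_(i < n) (x \in f C (E i)).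
Proof.
by rewrite /approval_score -sum1dep_card big_mkcond; apply: eq_bigr => i _; case: ifP.
Qed.

Lemma approval_winnersP (C : finType) (n : nat) (E : 'I_n -> rel C) (c : C) :
  reflect (forall d, approval_score f E d <= approval_score f E c)
          (c \in approval_winners f E).
Proof. by rewrite inE; apply: forallP. Qed.

Lemma c_improvement_approval_le (C : finType) (c d : C) (T T' : rel C) :
  TS_exclusive_monotonic f -> TS_ENM f -> c_improvement c T T' ->
  (d \in f C T') + (c \in f C T) <= (c \in f C T') + (d \in f C T).
Proof.
move=> exclusive_mono enm cTT'.
have [cT | cNT] := boolP (c \in f C T).
  have [cT' /subsetP/(_ d) sub_d] := exclusive_mono _ _ _ _ cTT' cT.
  move: cT cT' sub_d; lia.
have [/subsetP/(_ d) sub_d | Nsub] := boolP (f C T' \subset f C T).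
  move: cNT sub_d; lia.
have := enm _ _ _ _ cTT' cNT Nsub; move: cNT; lia.
Qed.

Lemma approval_monotonic_of_criteria :
  TS_exclusive_monotonic f -> TS_ENM f -> approval_monotonic f.
Proof.
move=> exclusive_mono enm C n E E' c _ _ /approval_winnersP c_wins improved.
apply/approval_winnersP => d; move: (c_wins d); rewrite !approval_scoreE => le_dc.
rewrite -(leq_add2r (\sum_(i < n) (c \in f C (E i)))).
apply: leq_trans (_ : _ <= \sum_i (c \in f C (E' i)) + \sum_i (d \in f C (E i))) _.
  by rewrite -!big_split; apply: leq_sum => i _; exact: c_improvement_approval_le.
by rewrite leq_add2l.
Qed.

Hypothesis condorcet : TS_Condorcet_consistent f.

Lemma f_source_rel (C : finType) (w : C) : f C (source_rel w) = [set w].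
Proof. by apply: condorcet; [exact: source_rel_tournament | exact: source_rel_source]. Qed.

(* The vote [T] followed by one vote with source [w], for each [w] in [s]. *)
Definition padded_election {C : finType} (T : rel C) (s : seq C) :
    'I_(size s).+1 -> rel C :=
  fun i => if unlift ord0 i is Some j then source_rel (tnth (in_tuple s) j) else T.

Lemma padded_election_ok (C : finType) (T : rel C) (s : seq C) :
  is_tournament T -> election_ok (padded_election T s).
Proof.
by move=> tourT i; rewrite /padded_election; case: unlift => // j;
  exact: source_rel_tournament.
Qed.

Lemma padded_scoreE (C : finType) (T : rel C) (s : seq C) (x : C) :
  approval_score f (padded_election T s) x = (x \in f C T) + count_mem x s.
Proof.
rewrite approval_scoreE big_ord_recl /padded_election unlift_none; congr (_ + _).
rewrite -sum1_count (big_tuple _ _ (in_tuple s)) /=.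
rewrite [RHS]big_mkcond; apply: eq_bigr => j _.
by rewrite liftK f_source_rel inE eq_sym; case: eqP.
Qed.

Lemma approval_monotonic_padded {C : finType} {c : C} {T T' : rel C} (s : seq C) :
  approval_monotonic f -> c_improvement c T T' ->
  (forall x, (x \in f C T) + count_mem x s <= (c \in f C T) + count_mem c s) ->
  (forall x, (x \in f C T') + count_mem x s <= (c \in f C T') + count_mem c s).
Proof.
move=> mono cTT' c_wins; have [tourT tourT' _ _] := cTT'.
have improved i : c_improvement c (padded_election T s i) (padded_election T' s i).
  rewrite /padded_election; case: unlift => // j.
  exact/c_improvement_refl/source_rel_tournament.
have /approval_winnersP c_wins' : c \in approval_winners f (padded_election T' s).
  apply: mono improved; try exact: padded_election_ok.
  by apply/approval_winnersP => y; rewrite !padded_scoreE.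
by move=> x; have := c_wins' x; rewrite !padded_scoreE.
Qed.

Lemma exclusive_monotonic_of_approval_monotonic :
  is_tournament_solution f -> approval_monotonic f -> TS_exclusive_monotonic f.
Proof.
move=> nonempty mono C c T T' cTT' cT.
have cT' : c \in f C T'.
  have [_ tourT' _ _] := cTT'.
  have /set0Pn[d dT'] : f C T' != set0 by apply: nonempty => //; apply/card_gt0P; exists c.
  have c_wins x : (x \in f C T) + count_mem x [::] <= (c \in f C T) + count_mem c [::].
    by rewrite /= cT !addn0 leq_b1.
  by have := approval_monotonic_padded [::] mono cTT' c_wins d; rewrite /= dT' !addn0 lt0b.
split=> //; apply/subsetP => d dT'; apply: contraT => dNT.
have cd : c != d by apply: contraNneq dNT => <-.
have c_wins x : (x \in f C T) + count_mem x [:: d] <= (c \in f C T) + count_mem c [:: d].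
  rewrite /= cT (eq_sym d c) (negbTE cd) !addn0.
  by case: (eqVneq d x) => [<- | _]; rewrite ?(negbTE dNT) ?addn0 ?leq_b1.
have := approval_monotonic_padded [:: d] mono cTT' c_wins d.
by rewrite /= dT' cT' eqxx (eq_sym d c) (negbTE cd).
Qed.

Lemma enm_of_approval_monotonic : approval_monotonic f -> TS_ENM f.
Proof.
move=> mono C c T T' cTT' cNT Nsub; apply: contraT => cNT'.
have [d dT' dNT] := subsetPn Nsub.
have cd : c != d by apply: contraNneq cNT' => ->.
have c_wins x :
    (x \in f C T) + count_mem x [:: c; d] <= (c \in f C T) + count_mem c [:: c; d].
  rewrite /= (negbTE cNT) eqxx (eq_sym d c) (negbTE cd) !addn0.
  case: (eqVneq c x) => [<- | _]; first by rewrite (negbTE cNT) (eq_sym d c) (negbTE cd).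
  by case: (eqVneq d x) => [<- | _]; rewrite ?(negbTE dNT) ?addn0 ?leq_b1.
have := approval_monotonic_padded [:: c; d] mono cTT' c_wins d.
by rewrite /= dT' (negbTE cNT') !eqxx (eq_sym d c) (negbTE cd).
Qed.

End Approval.

Theorem theorem2 (f : tsolution) :
  is_tournament_solution f -> TS_Condorcet_consistent f ->
  (approval_monotonic f <-> TS_exclusive_monotonic f /\ TS_ENM f).
Proof.
move=> nonempty condorcet; split=> [mono | [exclusive_mono enm]].
- split; [exact: exclusive_monotonic_of_approval_monotonic |
          exact: enm_of_approval_monotonic].
- exact: approval_monotonic_of_criteria.
Qed.
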